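(* Let $\mathcal X$ be a finite set. For every $\varepsilon>0$ there exist $\xi>0$ and $n_0>0$ such that for every $n>n_0$ the following holds. Suppose $\mu\in\mathcal P(\mathcal X^n)$ is $\xi$-homogeneous with respect to partitions $(\vec V,\vec S)$ of $[n]$ and $\mathcal X^n$, and $j\in[\#\vec S]$ is such that $\mu(S_j)>0$ and $\mu[\,\cdot\,|S_j]$ is $\xi$-regular with respect to $\vec V$. Then for every $\sigma\in S_j$, $$\sum_{i\in[\#\vec V]}\sum_{x\in V_i}\left\|\mu_x[\,\cdot\,|S_j]-\sigma[\,\cdot\,|V_i]\right\|_{TV}<\varepsilon n.$$
   Context: Notation: $\mathcal P(\mathcal X^n)$ is the set of probability measures on $\mathcal X^n$. For $\mu\in\mathcal P(\mathcal X^n)$, $\langle\cdot\rangle_\mu$ denotes expectation over $\boldsymbol\sigma\sim\mu$; $\mu_x$ is the marginal of coordinate $x$, and $\mu[\cdot|S]$, $\mu_x[\cdot|S]$ are $\mu$ and its marginal conditioned on $S\subset\mathcal X^n$. For $\emptyset\neq U\subset[n]$ and $\sigma\in\mathcal X^n$, $\sigma[\cdot|U]\in\mathcal P(\mathcal X)$ is $\sigma[\omega|U]=|U|^{-1}\sum_{u\in U}\mathbf 1\{\sigma(u)=\omega\}$. For a partition $\vec V=(V_1,\ldots,V_l)$, $\#\vec V=l$ is its size. Regularity: $\mu$ is $\varepsilon$-regular on $U\subset[n]$ if for every $S\subset U$ with $|S|\geq\varepsilon|U|$, $\langle\|\boldsymbol\sigma[\cdot|S]-\boldsymbol\sigma[\cdot|U]\|_{TV}\rangle_\mu<\varepsilon$.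 $\mu$ is $\varepsilon$-regular with respect to a partition $\vec V$ of $[n]$ if there is $J\subset[\#\vec V]$ with $\sum_{i\in J}|V_i|\geq(1-\varepsilon)n$ and $\mu$ is $\varepsilon$-regular on $V_i$ for all $i\in J$. Homogeneity: for partitions $\vec V$ of $[n]$ and $\vec S=(S_1,\ldots,S_{\#\vec S})$ of $\mathcal X^n$, $\mu$ is $\varepsilon$-homogeneous w.r.t. $(\vec V,\vec S)$ if there is $I\subset[\#\vec S]$ with: (HM1) $\mu(S_i)>0$ for all $i\in I$ and $\sum_{i\in I}\mu(S_i)\geq1-\varepsilon$; (HM2) for all $i\in[\#\vec S]$, $j\in[\#\vec V]$, $\max_{\sigma,\sigma'\in S_i}\|\sigma[\cdot|V_j]-\sigma'[\cdot|V_j]\|_{TV}<\varepsilon$; (HM3) for all $i\in I$, $\mu[\cdot|S_i]$ is $\varepsilon$-regular w.r.t. $\vec V$; (HM4) $\mu$ is $\varepsilon$-regular w.r.t. $\vec V$. *)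

From HB Require Import structures.
From mathcomp Require Import all_boot all_order all_algebra.
Set Implicit Arguments. Unset Strict Implicit. Unset Printing Implicit Defensive.
Import Order.TTheory GRing.Theory Num.Theory.
Local Open Scope ring_scope.

Section Defs.
Variables (R : realFieldType) (X : finType) (n : nat).

Notation conf := {ffun 'I_n -> X}.

Definition is_prob (mu : {ffun conf -> R}) : Prop :=
  (forall s, 0 <= mu s) /\ \sum_(s : conf) mu s = 1.

Definition mass (mu : {ffun conf -> R}) (S : {set conf}) : R :=
  \sum_(s in S) mu s.

Definition cond (mu : {ffun conf -> R}) (S : {set conf}) : {ffun conf -> R} :=
  [ffun s => if s \in S then mu s / mass mu S else 0].

Definition marg (mu : {ffun conf -> R}) (x : 'I_n) : {ffun X -> R} :=
  [ffun w => \sum_(s : conf | s x == w) mu s].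

Definition expect (mu : {ffun conf -> R}) (f : conf -> R) : R :=
  \sum_(s : conf) mu s * f s.

Definition emp (s : conf) (U : {set 'I_n}) : {ffun X -> R} :=
  [ffun w => #|[set u in U | s u == w]|%:R / #|U|%:R].

Definition tv (p q : {ffun X -> R}) : R :=
  2^-1 * \sum_w `|p w - q w|.

Definition regular_on (mu : {ffun conf -> R}) (eps : R) (U : {set 'I_n}) : Prop :=
  forall S : {set 'I_n}, S \subset U -> eps * #|U|%:R <= #|S|%:R ->
    expect mu (fun s => tv (emp s S) (emp s U)) < eps.

Definition regular_wrt (mu : {ffun conf -> R}) (eps : R)
    (PV : {set {set 'I_n}}) : Prop :=
  exists J : {set {set 'I_n}}, J \subset PV /\
    (1 - eps) * n%:R <= (\sum_(B in J) #|B|)%:R /\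
    (forall B, B \in J -> regular_on mu eps B).

Definition homogeneous (mu : {ffun conf -> R}) (eps : R)
    (PV : {set {set 'I_n}}) (PS : {set {set conf}}) : Prop :=
  exists I : {set {set conf}}, I \subset PS /\
    ((forall S, S \in I -> 0 < mass mu S) /\ 1 - eps <= \sum_(S in I) mass mu S) /\
    (forall S B, S \in PS -> B \in PV -> forall s s', s \in S -> s' \in S ->
        tv (emp s B) (emp s' B) < eps) /\
    (forall S, S \in I -> regular_wrt (cond mu S) eps PV) /\
    regular_wrt mu eps PV.

End Defs.

(** On a block [B] on which [mu[.|S_j]] is regular, the empirical distributions
    [s[.|B]] of all [s] in the support lie within [xi] of [sigma[.|B]] (by HM2).
    Fix a symbol [w] and split [B] according to the sign of
    [mu_x(w|S_j) - sigma(w|B)].  A part [S] with [|S| >= xi |B|] has, by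
    regularity, [sum_(x in S) mu_x(w|S_j) = |S| <s[w|S]>] with [<s[w|S]>] within
    [4 xi] of [sigma(w|B)]; a smaller part contributes at most [xi |B|].  Hence
    each regular block contributes [O(|X| xi |B|)], the irregular blocks cover at
    most [xi n] points and contribute [O(|X| xi n)], and [xi = eps / (6 (|X| + 1))]
    suffices. *)
From HB Require Import structures.
From mathcomp Require Import all_boot all_order all_algebra.
From mathcomp Require Import lra ring.
Set Implicit Arguments. Unset Strict Implicit. Unset Printing Implicit Defensive.
Import Order.TTheory GRing.Theory Num.Theory.
Local Open Scope ring_scope.

Section Bounds.
Variables (R : realFieldType) (X : finType) (n : nat).
Notation conf := {ffun 'I_n -> X}.

Lemma emp_ge0 (s : conf) (U : {set 'I_n}) w : 0 <= @emp R X n s U w.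
Proof. by rewrite ffunE divr_ge0. Qed.

Lemma emp_le1 (s : conf) (U : {set 'I_n}) w : @emp R X n s U w <= 1.
Proof.
rewrite ffunE; have [->|U_gt0] := posnP #|U|; first by rewrite invr0 mulr0.
rewrite ler_pdivrMr ?ltr0n // mul1r ler_nat subset_leq_card //.
by apply/subsetP => u; rewrite inE => /andP[].
Qed.

Lemma normB_le1 (a b : R) : 0 <= a <= 1 -> 0 <= b <= 1 -> `|a - b| <= 1.
Proof. by move=> /andP[? ?] /andP[? ?]; rewrite ler_norml; apply/andP; split; lra. Qed.

Lemma dist_le_tv (p q : {ffun X -> R}) w : `|p w - q w| <= 2 * tv p q.
Proof.
rewrite /tv mulrA mulfV ?mul1r ?pnatr_eq0 // (bigD1 w) //= lerDl.
exact: sumr_ge0.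
Qed.

Lemma tv_le_card (p q : {ffun X -> R}) :
  (forall w, 0 <= p w <= 1) -> (forall w, 0 <= q w <= 1) -> tv p q <= #|X|%:R.
Proof.
move=> p01 q01; rewrite /tv.
have sum_le : \sum_w `|p w - q w| <= #|X|%:R.
  by rewrite -sum1_card natr_sum; apply: ler_sum => w _; apply: normB_le1.
have : 0 <= \sum_w `|p w - q w| by apply: sumr_ge0.
lra.
Qed.

Lemma sum_norm_split (I : finType) (A : {set I}) (a : I -> R) :
  \sum_(x in A) `|a x| =
  \sum_(x in [set x in A | 0 <= a x]) a x - \sum_(x in [set x in A | a x < 0]) a x.
Proof.
rewrite (bigID (fun x => 0 <= a x)) /= -sumrN.
congr (_ + _); apply: eq_big => [x|x]; rewrite ?inE ?ltNge //.
- by case/andP=> _ a_ge0; rewrite ger0_norm.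
- by case/andP=> _ a_lt0; rewrite ltr0_norm // ltNge.
Qed.

Variable nu : {ffun conf -> R}.

Lemma sum_marg_expect_emp (S : {set 'I_n}) w : (0 < #|S|)%N ->
  \sum_(x in S) marg nu x w = #|S|%:R * expect nu (fun s => @emp R X n s S w).
Proof.
move=> S_gt0.
under eq_bigr do rewrite ffunE big_mkcond /=.
rewrite exchange_big /expect big_distrr /=; apply: eq_bigr => s _.
rewrite ffunE mulrCA [_ * (_ / _)]mulrCA mulfV ?pnatr_eq0 -?lt0n // mulr1 mulrC.
rewrite -sum1_card natr_sum mulr_suml [in RHS]big_mkcond [LHS]big_mkcond /=.
apply: eq_bigr => x _; rewrite inE.
by case: (x \in S); case: (s x == w); rewrite /= ?mul1r.
Qed.

Hypotheses (nu_ge0 : forall s, 0 <= nu s) (nu_sum1 : \sum_s nu s = 1).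

Lemma marg_ge0 x w : 0 <= marg nu x w.
Proof. by rewrite ffunE; apply: sumr_ge0. Qed.

Lemma marg_le1 x w : marg nu x w <= 1.
Proof.
rewrite ffunE -nu_sum1 [leRHS](bigID (fun s : conf => s x == w)) /= lerDl.
exact: sumr_ge0.
Qed.

Section RegularBlock.
Variables (B : {set 'I_n}) (w : X) (p xi : R).
Hypotheses (xi_gt0 : 0 < xi) (regB : regular_on nu xi B) (p01 : 0 <= p <= 1).
Hypothesis emp_near : forall s, 0 < nu s -> `|@emp R X n s B w - p| <= 2 * xi.

Lemma sum_marg_sub_large (S : {set 'I_n}) :
  (0 < #|S|)%N -> S \subset B -> xi * #|B|%:R <= #|S|%:R ->
  `|\sum_(x in S) (marg nu x w - p)| <= 4 * xi * #|S|%:R.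
Proof.
move=> S_gt0 sSB largeS; have regS := regB sSB largeS.
have -> : \sum_(x in S) (marg nu x w - p) =
    #|S|%:R * \sum_s nu s * (@emp R X n s S w - p).
  rewrite sumrB sum_marg_expect_emp // sumr_const /expect.
  under [in RHS]eq_bigr do rewrite mulrBr.
  by rewrite sumrB -mulr_suml nu_sum1 mul1r mulrBr !mulr_natl.
rewrite normrM ger0_norm // mulrC ler_pM2r ?ltr0n //.
apply: le_trans (ler_norm_sum _ _ _) _.
have pointwise s : `|nu s * (@emp R X n s S w - p)| <=
    2 * (nu s * tv (@emp R X n s S) (@emp R X n s B)) + nu s * (2 * xi).
  rewrite normrM ger0_norm // mulrCA -mulrDr.
  have [->|nu_neq0] := eqVneq (nu s) 0; first by rewrite !mul0r.
  apply: ler_wpM2l => //.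
  have := dist_le_tv (@emp R X n s S) (@emp R X n s B) w.
  have := ler_distD (@emp R X n s B w) (@emp R X n s S w) p.
  have nu_gt0 : 0 < nu s by rewrite lt0r nu_neq0 nu_ge0.
  have := emp_near nu_gt0.
  lra.
apply: le_trans (ler_sum _ (fun s _ => pointwise s)) _.
rewrite big_split /= -mulr_sumr -mulr_suml nu_sum1 mul1r.
rewrite /expect in regS; lra.
Qed.

Lemma sum_marg_sub_le (S : {set 'I_n}) : S \subset B ->
  `|\sum_(x in S) (marg nu x w - p)| <= 4 * xi * #|B|%:R.
Proof.
move=> sSB; have SB : #|S|%:R <= #|B|%:R :> R by rewrite ler_nat subset_leq_card.
have [/cards0_eq->|S_gt0] := posnP #|S|.
  by rewrite big_set0 normr0 !mulr_ge0 // ltW.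
have [largeS|smallS] := lerP (xi * #|B|%:R) #|S|%:R.
  have := sum_marg_sub_large S_gt0 sSB largeS.
  have : 0 <= xi * (#|B|%:R - #|S|%:R) by rewrite mulr_ge0 ?subr_ge0 // ltW.
  nra.
apply: le_trans (ler_norm_sum _ _ _) _.
have : \sum_(x in S) `|marg nu x w - p| <= #|S|%:R.
  rewrite -sum1_card natr_sum; apply: ler_sum => x _.
  by apply: normB_le1; rewrite // marg_ge0 marg_le1.
have : 0 <= xi * #|B|%:R by rewrite mulr_ge0 // ltW.
lra.
Qed.

Lemma sum_dist_marg_le : \sum_(x in B) `|marg nu x w - p| <= 8 * xi * #|B|%:R.
Proof.
rewrite sum_norm_split.
have sub_pos : [set x in B | 0 <= marg nu x w - p] \subset B.
  by apply/subsetP => x; rewrite inE => /andP[].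
have sub_neg : [set x in B | marg nu x w - p < 0] \subset B.
  by apply/subsetP => x; rewrite inE => /andP[].
have := ler_norm (\sum_(x in [set x in B | 0 <= marg nu x w - p]) (marg nu x w - p)).
have := ler_norm (- \sum_(x in [set x in B | marg nu x w - p < 0]) (marg nu x w - p)).
rewrite normrN.
have := sum_marg_sub_le sub_pos; have := sum_marg_sub_le sub_neg.
lra.
Qed.
End RegularBlock.

Lemma sum_tv_marg_emp_regular (B : {set 'I_n}) xi (sigma : conf) :
  0 < xi -> regular_on nu xi B ->
  (forall s, 0 < nu s -> tv (@emp R X n s B) (@emp R X n sigma B) < xi) ->
  \sum_(x in B) tv (marg nu x) (@emp R X n sigma B) <= 4 * #|X|%:R * xi * #|B|%:R.
Proof.
move=> xi_gt0 regB near_sigma.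
have per_symbol w :
    \sum_(x in B) `|marg nu x w - @emp R X n sigma B w| <= 8 * xi * #|B|%:R.
  apply: sum_dist_marg_le; rewrite ?emp_ge0 ?emp_le1 // => s nu_gt0.
  have := dist_le_tv (@emp R X n s B) (@emp R X n sigma B) w.
  have := near_sigma s nu_gt0; lra.
rewrite /tv -mulr_sumr exchange_big /=.
apply: le_trans (ler_wpM2l _ (ler_sum _ (fun w _ => per_symbol w))) _.
  by rewrite invr_ge0.
rewrite sumr_const (eq_card (B := X)) // -[_ *+ _]mulr_natl le_eqVlt.
by apply/predU1l; field.
Qed.

Lemma sum_tv_marg_emp_le (B : {set 'I_n}) (sigma : conf) :
  \sum_(x in B) tv (marg nu x) (@emp R X n sigma B) <= #|X|%:R * #|B|%:R.
Proof.
rewrite mulrC mulr_natl -sumr_const; apply: ler_sum => x _.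
by apply: tv_le_card => w; rewrite ?marg_ge0 ?marg_le1 ?emp_ge0 ?emp_le1.
Qed.
End Bounds.

Section Conditioning.
Variables (R : realFieldType) (X : finType) (n : nat).
Variables (mu : {ffun {ffun 'I_n -> X} -> R}) (S : {set {ffun 'I_n -> X}}).
Hypotheses (mu_prob : is_prob mu) (S_pos : 0 < mass mu S).

Lemma cond_ge0 s : 0 <= cond mu S s.
Proof.
case: mu_prob => mu_ge0 _; rewrite ffunE; case: ifP => // _.
by rewrite divr_ge0 // ltW.
Qed.

Lemma cond_sum1 : \sum_s cond mu S s = 1.
Proof.
under eq_bigr do rewrite ffunE.
by rewrite -big_mkcond /= -mulr_suml mulfV // lt0r_neq0.
Qed.

Lemma cond_gt0_mem s : 0 < cond mu S s -> s \in S.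
Proof. by rewrite ffunE; case: ifP; rewrite ?ltxx. Qed.
End Conditioning.

Lemma sum_partition_regular_le (R : realFieldType) (n : nat)
    (f : {set 'I_n} -> R) (PV J : {set {set 'I_n}}) (c K xi : R) :
  partition PV [set: 'I_n] -> J \subset PV ->
  (1 - xi) * n%:R <= (\sum_(B in J) #|B|)%:R -> 0 <= c -> 0 <= K ->
  (forall B, B \in PV -> B \in J -> f B <= c * #|B|%:R) ->
  (forall B, B \in PV -> f B <= K * #|B|%:R) ->
  \sum_(B in PV) f B <= c * n%:R + K * (xi * n%:R).
Proof.
move=> PV_part sJ J_large c_ge0 K_ge0 f_reg f_le.
set a := (\sum_(B in PV | B \in J) #|B|)%N.
set b := (\sum_(B in PV | B \notin J) #|B|)%N.
have cover : (a + b)%N = n.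
  by rewrite /a /b -bigID -(card_partition PV_part) cardsT card_ord.
have J_a : (\sum_(B in J) #|B|)%N = a.
  apply: eq_bigl => B; apply/idP/andP => [B_J|[]//].
  by rewrite (subsetP sJ).
rewrite J_a in J_large.
rewrite (bigID (mem J)) /=.
have reg_part : \sum_(B in PV | B \in J) f B <= c * a%:R.
  by rewrite natr_sum mulr_sumr; apply: ler_sum => B /andP[]; apply: f_reg.
have irreg_part : \sum_(B in PV | B \notin J) f B <= K * b%:R.
  by rewrite natr_sum mulr_sumr; apply: ler_sum => B /andP[B_PV _]; apply: f_le.
have n_ab : n%:R = a%:R + b%:R :> R by rewrite -natrD cover.
have b_small : b%:R <= xi * n%:R by lra.
have a_le_n : a%:R <= n%:R :> R by rewrite n_ab lerDl.
have := ler_wpM2l c_ge0 a_le_n.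
have := ler_wpM2l K_ge0 b_small.
lra.
Qed.

Theorem lemma8 (R : archiRealFieldType) (X : finType) (eps : R) :
  0 < eps ->
  exists xi : R, 0 < xi /\
  exists n0 : nat, (0 < n0)%N /\
  forall n : nat, (n0 < n)%N ->
  forall (mu : {ffun {ffun 'I_n -> X} -> R})
         (PV : {set {set 'I_n}}) (PS : {set {set {ffun 'I_n -> X}}})
         (Sj : {set {ffun 'I_n -> X}}),
    is_prob mu ->
    partition PV [set: 'I_n] ->
    partition PS [set: {ffun 'I_n -> X}] ->
    homogeneous mu xi PV PS ->
    Sj \in PS ->
    0 < mass mu Sj ->
    regular_wrt (cond mu Sj) xi PV ->
    forall sigma, sigma \in Sj ->
      \sum_(B in PV) \sum_(x in B) tv (marg (cond mu Sj) x) (@emp R X n sigma B)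
        < eps * n%:R.
Proof.
move=> eps_gt0; set K : R := #|X|%:R.
have K_ge0 : 0 <= K by [].
have xi_gt0 : 0 < eps / (6 * (K + 1)) by rewrite divr_gt0 // mulr_gt0 //; lra.
exists (eps / (6 * (K + 1))); split => //; set xi := eps / _.
exists 1%N; split => // n n_gt1 mu PV PS Sj mu_prob PV_part _.
move=> [_ [_ [_ [HM2 _]]]] Sj_PS Sj_pos.
case=> J [sJ [J_large J_reg]] sigma sigma_Sj.
have cond_ge0 := cond_ge0 mu_prob Sj_pos.
have cond_sum1 := cond_sum1 Sj_pos.
apply: le_lt_trans
  (sum_partition_regular_le (c := 4 * K * xi) PV_part sJ J_large _ K_ge0 _ _) _.
- by apply/mulr_ge0/ltW; rewrite ?mulr_ge0.
- move=> B B_PV B_J.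
  apply: (sum_tv_marg_emp_regular cond_ge0 cond_sum1 xi_gt0 (J_reg B B_J)).
  by move=> s /cond_gt0_mem s_Sj; apply: (HM2 Sj B).
- by move=> B _; apply: sum_tv_marg_emp_le cond_ge0 cond_sum1 _ _.
have eps_xi : eps = 6 * (K + 1) * xi by rewrite /xi; field; lra.
have xin_gt0 : 0 < xi * n%:R by rewrite mulr_gt0 // ltr0n (leq_trans _ n_gt1).
have Kxin_ge0 : 0 <= K * (xi * n%:R) by rewrite mulr_ge0 // ltW.
have -> : 4 * K * xi * n%:R = 4 * (K * (xi * n%:R)) by ring.
have -> : eps * n%:R = 6 * (K * (xi * n%:R)) + 6 * (xi * n%:R) by rewrite eps_xi; ring.
lra.
Qed.
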